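(* Let $\Delta\subset\mathbb{R}^2$ be a lattice polygon with $\operatorname{lw}(\Delta)=d>0$. Let $P$ be a vertex of $\Delta$ and let $v\in\mathbb{Z}^2$ be a primitive vector. If $\operatorname{lw}_v(\Delta_P)<d$ and $\operatorname{lw}_v(\Delta_P)<\operatorname{lw}_v(\Delta)-1$, then $\Delta$ is unimodularly equivalent to $\Upsilon_{d-1}:=\operatorname{conv}\{(0,0),(1,d),(d,1)\}$.
   Context: A lattice polygon is the convex hull of a finite non-empty set of points of $\mathbb{Z}^2$. For a lattice polygon $\Delta$ and a non-zero primitive $v\in\mathbb{Z}^2$, $\operatorname{lw}_v(\Delta)=\max_{Q\in\Delta}\langle Q,v\rangle-\min_{Q\in\Delta}\langle Q,v\rangle$, and $\operatorname{lw}(\Delta)=\min_v\operatorname{lw}_v(\Delta)$ over all non-zero primitive $v\in\mathbb{Z}^2$. For a vertex $P$ of $\Delta$, $\Delta_P:=\operatorname{conv}((\Delta\cap\mathbb{Z}^2)\setminus\{P\})$. Two lattice polygons are (unimodularly) equivalent if one is the image of the other under a map $x\mapsto Ax+b$ with $A\in\mathrm{GL}_2(\mathbb{Z})$, $b\in\mathbb{Z}^2$. *)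

From Stdlib Require Import Reals ZArith List.
Open Scope R_scope.

Definition zpt := (Z * Z)%type.
Definition rpt := (R * R)%type.

Definition toR (p : zpt) : rpt := (IZR (fst p), IZR (snd p)).

Definition dot (q : rpt) (v : zpt) : R :=
  fst q * IZR (fst v) + snd q * IZR (snd v).

Definition convZ (A : zpt -> Prop) (x : rpt) : Prop :=
  exists l : list (R * zpt),
    Forall (fun cq => 0 <= fst cq /\ A (snd cq)) l /\
    fold_right (fun cq s => fst cq + s) 0 l = 1 /\
    fst x = fold_right (fun cq s => fst cq * IZR (fst (snd cq)) + s) 0 l /\
    snd x = fold_right (fun cq s => fst cq * IZR (snd (snd cq)) + s) 0 l.

Definition polygon (S : list zpt) : rpt -> Prop := convZ (fun z => In z S).

Definition is_vertex (D : rpt -> Prop) (x : rpt) : Prop :=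
  D x /\ forall y z t, D y -> D z -> 0 < t < 1 ->
    x = (t * fst y + (1 - t) * fst z, t * snd y + (1 - t) * snd z) -> y = z.

(* Delta_P := conv((Delta ∩ Z^2) \ {P}) *)
Definition remove_vertex (D : rpt -> Prop) (P : zpt) : rpt -> Prop :=
  convZ (fun z => D (toR z) /\ z <> P).

Definition primitive_vec (v : zpt) : Prop := Z.gcd (fst v) (snd v) = 1%Z.

(* lw_v(D) = w : max_{Q in D} <Q,v> - min_{Q in D} <Q,v> = w
   (both extrema attained, as D is compact) *)
Definition lw_dir (D : rpt -> Prop) (v : zpt) (w : R) : Prop :=
  (exists x y, D x /\ D y /\ dot y v - dot x v = w) /\
  (forall x y, D x -> D y -> dot y v - dot x v <= w).

Definition lw (D : rpt -> Prop) (w : R) : Prop :=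
  (exists v, primitive_vec v /\ lw_dir D v w) /\
  (forall v w', primitive_vec v -> lw_dir D v w' -> w <= w').

Definition unimod_equiv (D1 D2 : rpt -> Prop) : Prop :=
  exists a11 a12 a21 a22 b1 b2 : Z,
    (a11 * a22 - a12 * a21 = 1 \/ a11 * a22 - a12 * a21 = -1)%Z /\
    forall x : rpt, D2 x <-> exists y : rpt, D1 y /\
      x = (IZR a11 * fst y + IZR a12 * snd y + IZR b1,
           IZR a21 * fst y + IZR a22 * snd y + IZR b2).

(* Upsilon_{d-1} := conv{(0,0),(1,d),(d,1)} *)
Definition Upsilon_pred (d : Z) : rpt -> Prop :=
  polygon ((0,0)%Z :: (1,d)%Z :: (d,1)%Z :: nil).

From Stdlib Require Import Reals ZArith List Lra Lia Psatz Classical.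
Open Scope R_scope.

(* Orient [v] as [w] so that [P] has minimal level [<z - P, w>] on [Δ], and let [B = lw_w(Δ)].
   Removing [P] lowers the width by more than 1, so every other lattice point of [Δ] has level at
   least 2, and a lowest one [Q] has level [k > B - d].  By minimality [Q - P] is primitive and
   splits as [e1 + e2] for a unimodular basis with levels [q1, q2 >= 1]; as [P + e1] and [P + e2]
   are not in [Δ], every lattice point [z <> P] of [Δ] satisfies [z - P = U e1 + W e2] with
   [U, W >= 1] and level [q2 U + q1 W <= B < q1 + q2 + d].  Width at least [d] in the directions
   dual to [U] and [W] then forces [q1 = q2 = 1], [d >= 2] and [U + W <= d + 1], with the points
   [(U, W) = (d, 1), (1, d)] attained: [z |-> (U, W)] maps [Δ] onto [Υ_(d-1)]. *)

(** * Convex hulls of lattice points *)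

Definition wsum (f : R * zpt -> R) (l : list (R * zpt)) : R :=
  fold_right (fun cq s => f cq + s) 0 l.

Lemma convZ_wsum A x : convZ A x <->
  exists l, Forall (fun cq => 0 <= fst cq /\ A (snd cq)) l /\ wsum fst l = 1 /\
    fst x = wsum (fun cq => fst cq * IZR (fst (snd cq))) l /\
    snd x = wsum (fun cq => fst cq * IZR (snd (snd cq))) l.
Proof. reflexivity. Qed.

Lemma wsum_app f l1 l2 : wsum f (l1 ++ l2) = wsum f l1 + wsum f l2.
Proof.
  induction l1 as [|cq l IH]; simpl; [ring|].
  unfold wsum in IH |- *; simpl. rewrite IH. ring.
Qed.

Definition wscale (r : R) (l : list (R * zpt)) : list (R * zpt) :=
  map (fun cq => (r * fst cq, snd cq)) l.

Lemma wsum_scale f r l : (forall c q, f (r * c, q) = r * f (c, q)) ->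
  wsum f (wscale r l) = r * wsum f l.
Proof.
  intros Hf. induction l as [|[c q] l IH]; simpl; [ring|].
  unfold wsum in IH |- *; simpl. rewrite IH, Hf. ring.
Qed.

Lemma Forall_wscale (A : zpt -> Prop) r l : 0 <= r ->
  Forall (fun cq => 0 <= fst cq /\ A (snd cq)) l ->
  Forall (fun cq => 0 <= fst cq /\ A (snd cq)) (wscale r l).
Proof.
  intros Hr H. apply Forall_map. eapply Forall_impl; [|exact H].
  intros [c q] [Hc HA]; simpl in *. split; [nra|exact HA].
Qed.

Lemma convZ_point (A : zpt -> Prop) z : A z -> convZ A (toR z).
Proof.
  intros H. apply convZ_wsum. exists ((1, z) :: nil).
  unfold wsum; simpl. repeat split; try ring.
  constructor; [simpl; split; [lra|exact H]|constructor].
Qed.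

Definition comb3 (r s t : R) (x y z : rpt) : rpt :=
  (r * fst x + s * fst y + t * fst z, r * snd x + s * snd y + t * snd z).

Lemma convZ_comb3 (A : zpt -> Prop) x y z r s t :
  convZ A x -> convZ A y -> convZ A z -> 0 <= r -> 0 <= s -> 0 <= t -> r + s + t = 1 ->
  convZ A (comb3 r s t x y z).
Proof.
  rewrite !convZ_wsum.
  intros [l1 [F1 [W1 [X1 Y1]]]] [l2 [F2 [W2 [X2 Y2]]]] [l3 [F3 [W3 [X3 Y3]]]] Hr Hs Ht Hsum.
  exists (wscale r l1 ++ wscale s l2 ++ wscale t l3).
  repeat split; rewrite ?wsum_app, ?wsum_scale by (intros; simpl; ring); simpl.
  - repeat (apply Forall_app; split); apply Forall_wscale; assumption.
  - rewrite W1, W2, W3. lra.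
  - rewrite X1, X2, X3. ring.
  - rewrite Y1, Y2, Y3. ring.
Qed.

Definition dotZ (z v : zpt) : Z := (fst z * fst v + snd z * snd v)%Z.

Lemma dot_toR z v : dot (toR z) v = IZR (dotZ z v).
Proof. unfold dot, toR, dotZ; simpl. rewrite plus_IZR, !mult_IZR. ring. Qed.

Lemma convZ_affine_le (A : zpt -> Prop) x v c M :
  convZ A x -> (forall z, A z -> dot (toR z) v + c <= M) -> dot x v + c <= M.
Proof.
  rewrite convZ_wsum. intros [l [Hf [H1 [Hx Hy]]]] Hz.
  enough (G : dot x v + c * wsum fst l <= M * wsum fst l) by (rewrite H1 in G; lra).
  unfold dot. rewrite Hx, Hy. clear H1 Hx Hy.
  induction Hf as [|[r q] l [Hr HA] _ IH]; unfold wsum in *; simpl in *; [lra|].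
  specialize (Hz q HA). unfold dot, toR in Hz; simpl in Hz. nra.
Qed.

Lemma convZ_lattice_comb3 (A : zpt -> Prop) p q z r (c0 c1 c2 : Z) :
  convZ A (toR p) -> convZ A (toR q) -> convZ A (toR z) ->
  (0 <= c0)%Z -> (0 <= c1)%Z -> (0 <= c2)%Z -> (0 < c0 + c1 + c2)%Z ->
  ((c0 + c1 + c2) * fst r = c0 * fst p + c1 * fst q + c2 * fst z)%Z ->
  ((c0 + c1 + c2) * snd r = c0 * snd p + c1 * snd q + c2 * snd z)%Z ->
  convZ A (toR r).
Proof.
  intros Hp Hq Hz H0 H1 H2 Hn Ex Ey.
  apply IZR_le in H0, H1, H2. apply IZR_lt in Hn.
  apply (f_equal IZR) in Ex, Ey. repeat rewrite ?mult_IZR, ?plus_IZR in Ex, Ey.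
  rewrite !plus_IZR in Hn.
  set (n := IZR c0 + IZR c1 + IZR c2) in *.
  replace (toR r) with (comb3 (IZR c0 / n) (IZR c1 / n) (IZR c2 / n) (toR p) (toR q) (toR z)).
  - apply convZ_comb3; auto; try (apply Rmult_le_pos; [lra|apply Rlt_le, Rinv_0_lt_compat; lra]).
    unfold n in *; field; lra.
  - unfold comb3, toR; simpl. f_equal; apply (Rmult_eq_reg_l n); try lra;
      [rewrite Ex|rewrite Ey]; field; lra.
Qed.

(** * Lattice widths of polygons *)

Lemma In_argmax (S : list zpt) (f : zpt -> Z) : S <> nil ->
  exists s, In s S /\ forall z, In z S -> (f z <= f s)%Z.
Proof.
  intros HS. induction S as [|a S IH]; [congruence|].
  destruct S as [|b S]; [exists a; split; [left; reflexivity|intros z [<-|[]]; lia]|].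
  destruct IH as [s [Hs Hm]]; [discriminate|].
  destruct (Z.le_ge_cases (f a) (f s)).
  - exists s. split; [right; exact Hs|]. intros z [<-|Hz]; [lia|auto].
  - exists a. split; [left; reflexivity|]. intros z [<-|Hz]; [lia|specialize (Hm z Hz); lia].
Qed.

Lemma In_argmin (S : list zpt) (f : zpt -> Z) : S <> nil ->
  exists s, In s S /\ forall z, In z S -> (f s <= f z)%Z.
Proof.
  intros HS. destruct (In_argmax S (fun z => - f z)%Z HS) as [s [Hs Hm]].
  exists s. split; [exact Hs|]. intros z Hz. specialize (Hm z Hz). lia.
Qed.

Definition zopp (v : zpt) : zpt := (- fst v, - snd v)%Z.

Lemma dot_zopp x v : dot x (zopp v) = - dot x v.
Proof. unfold dot, zopp; simpl. rewrite !opp_IZR. ring. Qed.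

Lemma dotZ_zopp z v : dotZ z (zopp v) = (- dotZ z v)%Z.
Proof. unfold dotZ, zopp; simpl. ring. Qed.

Lemma primitive_zopp v : primitive_vec v -> primitive_vec (zopp v).
Proof. unfold primitive_vec, zopp; simpl. now rewrite Z.gcd_opp_l, Z.gcd_opp_r. Qed.

Lemma primitive_of_bezout v x y : (x * fst v + y * snd v = 1)%Z -> primitive_vec v.
Proof. intros H. apply Z.bezout_1_gcd. exists x, y. exact H. Qed.

Lemma polygon_dot_le S x v c M : polygon S x ->
  (forall z, In z S -> (dotZ z v + c <= M)%Z) -> dot x v + IZR c <= IZR M.
Proof.
  intros Hx Hb. apply (convZ_affine_le _ _ _ _ _ Hx). intros z Hz.
  rewrite dot_toR, <- plus_IZR. apply IZR_le, Hb, Hz.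
Qed.

Lemma polygon_dot_bounds S x v m M : polygon S x ->
  (forall z, In z S -> (m <= dotZ z v <= M)%Z) -> IZR m <= dot x v <= IZR M.
Proof.
  intros Hx Hb. split.
  - enough (dot x (zopp v) + IZR 0 <= IZR (- m)) by (rewrite dot_zopp, opp_IZR in *; lra).
    apply (polygon_dot_le _ _ _ _ _ Hx). intros z Hz. rewrite dotZ_zopp. specialize (Hb z Hz). lia.
  - enough (dot x v + IZR 0 <= IZR M) by lra.
    apply (polygon_dot_le _ _ _ _ _ Hx). intros z Hz. specialize (Hb z Hz). lia.
Qed.

Lemma lw_dir_unique D v W W' : lw_dir D v W -> lw_dir D v W' -> W = W'.
Proof.
  intros [[x [y [Hx [Hy <-]]]] HW] [[x' [y' [Hx' [Hy' <-]]]] HW'].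
  apply Rle_antisym; [apply HW'|apply HW]; assumption.
Qed.

Lemma lw_dir_polygon_extremes S v s1 s2 : In s1 S -> In s2 S ->
  (forall z, In z S -> (dotZ s1 v <= dotZ z v <= dotZ s2 v)%Z) ->
  lw_dir (polygon S) v (IZR (dotZ s2 v - dotZ s1 v)).
Proof.
  intros H1 H2 Hb. split.
  - exists (toR s1), (toR s2). repeat split; try (apply convZ_point; assumption).
    rewrite !dot_toR, minus_IZR. reflexivity.
  - intros x y Hx Hy.
    destruct (polygon_dot_bounds _ _ _ _ _ Hx Hb), (polygon_dot_bounds _ _ _ _ _ Hy Hb).
    rewrite minus_IZR. lra.
Qed.

Lemma lw_dir_polygon S v W : S <> nil -> lw_dir (polygon S) v W ->
  exists s1 s2, In s1 S /\ In s2 S /\ IZR (dotZ s2 v - dotZ s1 v) = W /\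
    (forall z, In z S -> (dotZ s1 v <= dotZ z v <= dotZ s2 v)%Z).
Proof.
  intros HS HW.
  destruct (In_argmin S (fun z => dotZ z v) HS) as [s1 [H1 M1]].
  destruct (In_argmax S (fun z => dotZ z v) HS) as [s2 [H2 M2]].
  assert (Hb : forall z, In z S -> (dotZ s1 v <= dotZ z v <= dotZ s2 v)%Z) by auto.
  exists s1, s2. repeat split; auto.
  exact (lw_dir_unique _ _ _ _ (lw_dir_polygon_extremes S v s1 s2 H1 H2 Hb) HW).
Qed.

Lemma lw_le_width S d v c m M : lw (polygon S) (IZR d) -> S <> nil -> primitive_vec v ->
  (forall z, In z S -> (m <= dotZ z v + c <= M)%Z) -> (d <= M - m)%Z.
Proof.
  intros [_ Hmin] HS Hv Hb.
  destruct (In_argmin S (fun z => dotZ z v) HS) as [s1 [H1 M1]].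
  destruct (In_argmax S (fun z => dotZ z v) HS) as [s2 [H2 M2]].
  assert (Hd := Hmin _ _ Hv (lw_dir_polygon_extremes S v s1 s2 H1 H2 ltac:(auto))).
  apply le_IZR in Hd. destruct (Hb s1 H1), (Hb s2 H2). lia.
Qed.

Lemma lw_far_point S d v c m : lw (polygon S) (IZR d) -> S <> nil -> primitive_vec v ->
  (forall z, In z S -> (m <= dotZ z v + c)%Z) -> exists z, In z S /\ (m + d <= dotZ z v + c)%Z.
Proof.
  intros Hlw HS Hv Hb.
  destruct (In_argmax S (fun z => dotZ z v) HS) as [s [Hs Ms]].
  exists s. split; [exact Hs|].
  enough (d <= dotZ s v + c - m)%Z by lia.
  apply (lw_le_width S d v c); auto. intros z Hz. specialize (Ms z Hz). specialize (Hb z Hz). lia.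
Qed.

Lemma lw_dir_zopp D v W : lw_dir D v W -> lw_dir D (zopp v) W.
Proof.
  intros [[x [y [Hx [Hy E]]]] Hle]. split.
  - exists y, x. rewrite !dot_zopp. repeat split; auto. lra.
  - intros x' y' Hx' Hy'. rewrite !dot_zopp. specialize (Hle y' x' Hy' Hx'). lra.
Qed.

(** * The triangle Υ and unimodular maps onto it *)

Definition Upsilon_ineqZ (d : Z) (t : zpt) : Prop :=
  (snd t <= d * fst t /\ fst t <= d * snd t /\ fst t + snd t <= d + 1)%Z.

Definition Upsilon_ineqR (d : Z) (t : rpt) : Prop :=
  snd t <= IZR d * fst t /\ fst t <= IZR d * snd t /\ fst t + snd t <= IZR d + 1.

Lemma Upsilon_ineqR_barycentric d t : (2 <= d)%Z -> Upsilon_ineqR d t ->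
  exists l1 l2, 0 <= l1 /\ 0 <= l2 /\ l1 + l2 <= 1 /\ t = (l1 + l2 * IZR d, l1 * IZR d + l2).
Proof.
  intros Hd [H1 [H2 H3]]. apply IZR_le in Hd. destruct t as [X Y]; simpl in *.
  set (D := IZR d) in *. assert (HD : 0 < D * D - 1) by nra.
  exists ((D * Y - X) / (D * D - 1)), ((D * X - Y) / (D * D - 1)).
  repeat split; try (f_equal; field; lra).
  - apply Rmult_le_pos; [lra|apply Rlt_le, Rinv_0_lt_compat; lra].
  - apply Rmult_le_pos; [lra|apply Rlt_le, Rinv_0_lt_compat; lra].
  - apply (Rmult_le_reg_r (D * D - 1)); [lra|]. field_simplify; nra.
Qed.

Lemma Upsilon_vertex_combination d l1 l2 : 0 <= l1 -> 0 <= l2 -> l1 + l2 <= 1 ->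
  Upsilon_pred d (l1 + l2 * IZR d, l1 * IZR d + l2).
Proof.
  intros H1 H2 H3.
  replace (l1 + l2 * IZR d, l1 * IZR d + l2) with
    (comb3 (1 - l1 - l2) l1 l2 (toR (0,0)%Z) (toR (1,d)%Z) (toR (d,1)%Z))
    by (unfold comb3, toR; simpl; f_equal; ring).
  apply convZ_comb3; try lra; apply (convZ_point _ (_, _)); simpl; tauto.
Qed.

Section AffineMap.
Variables (u1 u2 : zpt) (c1 c2 : Z).

Definition affZ (z : zpt) : zpt := (dotZ z u1 + c1, dotZ z u2 + c2)%Z.
Definition affR (x : rpt) : rpt := (dot x u1 + IZR c1, dot x u2 + IZR c2).

Lemma affR_toR z : affR (toR z) = toR (affZ z).
Proof. unfold affR, affZ, toR at 3; simpl. rewrite !plus_IZR, !dot_toR. reflexivity. Qed.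

Lemma affR_comb3 r s t x y z : r + s + t = 1 ->
  affR (comb3 r s t x y z) = comb3 r s t (affR x) (affR y) (affR z).
Proof.
  intros H. unfold affR, comb3, dot; simpl. f_equal;
    [replace (IZR c1) with ((r + s + t) * IZR c1) at 1 by (rewrite H; ring)
    |replace (IZR c2) with ((r + s + t) * IZR c2) at 1 by (rewrite H; ring)]; ring.
Qed.

Lemma polygon_affR_le S y (a b M : Z) : polygon S y ->
  (forall z, In z S -> (a * fst (affZ z) + b * snd (affZ z) <= M)%Z) ->
  IZR a * fst (affR y) + IZR b * snd (affR y) <= IZR M.
Proof.
  intros Hy Hb.
  replace (IZR a * fst (affR y) + IZR b * snd (affR y)) with
    (dot y (a * fst u1 + b * fst u2, a * snd u1 + b * snd u2)%Z + IZR (a * c1 + b * c2))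
    by (unfold affR, dot; simpl; rewrite !plus_IZR, !mult_IZR; ring).
  apply (polygon_dot_le _ _ _ _ _ Hy). intros z Hz. specialize (Hb z Hz).
  unfold affZ, dotZ in *; simpl in *. lia.
Qed.

Lemma polygon_affR_Upsilon_ineqR S d y : polygon S y ->
  (forall z, In z S -> Upsilon_ineqZ d (affZ z)) -> Upsilon_ineqR d (affR y).
Proof.
  intros Hy HS.
  assert (Hle : forall a b M, (forall t, Upsilon_ineqZ d t -> (a * fst t + b * snd t <= M)%Z) ->
                  IZR a * fst (affR y) + IZR b * snd (affR y) <= IZR M)
    by (intros a b M Hab; apply (polygon_affR_le S); auto).
  assert (H1 := Hle (- d)%Z 1%Z 0%Z ltac:(unfold Upsilon_ineqZ; intros; lia)).
  assert (H2 := Hle 1%Z (- d)%Z 0%Z ltac:(unfold Upsilon_ineqZ; intros; lia)).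
  assert (H3 := Hle 1%Z 1%Z (d + 1)%Z ltac:(unfold Upsilon_ineqZ; intros; lia)).
  rewrite opp_IZR in H1, H2. rewrite plus_IZR in H3.
  unfold Upsilon_ineqR. destruct (affR y) as [X Y]; simpl in *. lra.
Qed.

End AffineMap.

Lemma Upsilon_pred_iff d x : (2 <= d)%Z -> Upsilon_pred d x <-> Upsilon_ineqR d x.
Proof.
  intros Hd. split.
  - intros Hx.
    replace x with (affR (1, 0)%Z (0, 1)%Z 0 0 x)
      by (destruct x; unfold affR, dot; simpl; f_equal; ring).
    apply (polygon_affR_Upsilon_ineqR _ _ _ _ _ _ _ Hx).
    intros z [<-|[<-|[<-|[]]]]; unfold Upsilon_ineqZ, affZ, dotZ; cbn [fst snd]; nia.
  - intros H. destruct (Upsilon_ineqR_barycentric d x Hd H) as [l1 [l2 [? [? [? ->]]]]].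
    apply Upsilon_vertex_combination; assumption.
Qed.

Lemma unimod_equiv_Upsilon S d u1 u2 c1 c2 p zu zw : (2 <= d)%Z ->
  (fst u1 * snd u2 - snd u1 * fst u2 = 1)%Z ->
  polygon S (toR p) -> polygon S (toR zu) -> polygon S (toR zw) ->
  affZ u1 u2 c1 c2 p = (0, 0)%Z -> affZ u1 u2 c1 c2 zu = (d, 1)%Z ->
  affZ u1 u2 c1 c2 zw = (1, d)%Z ->
  (forall z, In z S -> Upsilon_ineqZ d (affZ u1 u2 c1 c2 z)) ->
  unimod_equiv (polygon S) (Upsilon_pred d).
Proof.
  intros Hd Hdet Hp Hzu Hzw Ep Ezu Ezw HS.
  assert (Haff : forall y, affR u1 u2 c1 c2 y =
    (IZR (fst u1) * fst y + IZR (snd u1) * snd y + IZR c1,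
     IZR (fst u2) * fst y + IZR (snd u2) * snd y + IZR c2))
    by (intros; unfold affR, dot; f_equal; ring).
  exists (fst u1), (snd u1), (fst u2), (snd u2), c1, c2. split; [left; exact Hdet|].
  intros x. rewrite Upsilon_pred_iff by exact Hd. split.
  - intros Hx. destruct (Upsilon_ineqR_barycentric d x Hd Hx) as [l1 [l2 [H1 [H2 [H3 ->]]]]].
    exists (comb3 (1 - l1 - l2) l1 l2 (toR p) (toR zw) (toR zu)).
    split; [apply convZ_comb3; auto; lra|].
    rewrite <- Haff, affR_comb3 by ring. rewrite !affR_toR, Ep, Ezu, Ezw.
    unfold comb3, toR; simpl. f_equal; ring.
  - intros [y [Hy ->]]. rewrite <- Haff. exact (polygon_affR_Upsilon_ineqR _ _ _ _ S d y Hy HS).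
Qed.
Open Scope Z_scope.

(** * The lattice cone at a vertex *)

Lemma Z_exists_min (Pz : Z -> Prop) (m : Z) : (exists n, Pz n) -> (forall n, Pz n -> m <= n) ->
  exists n, Pz n /\ forall n', Pz n' -> n <= n'.
Proof.
  intros [n0 Hn0] Hlb.
  destruct (dec_inh_nat_subset_has_unique_least_element (fun j => Pz (m + Z.of_nat j))
              (fun j => classic _)) as [j [[Hj Hmin] _]].
  { exists (Z.to_nat (n0 - m)). rewrite Z2Nat.id by (specialize (Hlb _ Hn0); lia).
    now replace (m + (n0 - m)) with n0 by ring. }
  exists (m + Z.of_nat j). split; [exact Hj|]. intros n' Hn'.
  assert (Hle : (j <= Z.to_nat (n' - m))%nat).
  { apply Hmin. rewrite Z2Nat.id by (specialize (Hlb _ Hn'); lia).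
    now replace (m + (n' - m)) with n' by ring. }
  specialize (Hlb _ Hn'). lia.
Qed.

(* Complete [(dx, dy)] to a unimodular basis by Bezout and shear the new vector along [(dx, dy)]
   until its level lies in [[0, k)]; level 0 is impossible, as [k] would then divide [w]. *)
Lemma primitive_split dx dy w1 w2 : Z.gcd dx dy = 1 -> Z.gcd w1 w2 = 1 ->
  2 <= dx * w1 + dy * w2 ->
  exists a1 b1 a2 b2, a1 + a2 = dx /\ b1 + b2 = dy /\ a1 * b2 - a2 * b1 = 1 /\
    1 <= a1 * w1 + b1 * w2 /\ 1 <= a2 * w1 + b2 * w2.
Proof.
  intros Hd Hw Hk. set (k := dx * w1 + dy * w2) in *.
  destruct (Z.gcd_bezout dx dy 1 Hd) as [u [v Huv]].
  set (t := (v * w1 - u * w2) / k).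
  set (a1 := v - t * dx). set (b1 := - u - t * dy).
  assert (Hdet : a1 * dy - b1 * dx = 1) by (unfold a1, b1; lia).
  assert (Hq : a1 * w1 + b1 * w2 = (v * w1 - u * w2) mod k).
  { rewrite (Z.mod_eq _ k) by lia. unfold a1, b1, t, k. ring. }
  assert (Hqk : 0 <= a1 * w1 + b1 * w2 < k) by (rewrite Hq; apply Z.mod_pos_bound; lia).
  assert (Hq0 : a1 * w1 + b1 * w2 <> 0).
  { intros Hq0.
    assert (H1 : (k | w1)).
    { exists (- b1). rewrite <- (Z.mul_1_r w1) at 1. rewrite <- Hdet.
      assert (dy * (a1 * w1 + b1 * w2) = 0) by (rewrite Hq0; ring). unfold k. lia. }
    assert (H2 : (k | w2)).
    { exists a1. rewrite <- (Z.mul_1_r w2) at 1. rewrite <- Hdet.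
      assert (dx * (a1 * w1 + b1 * w2) = 0) by (rewrite Hq0; ring). unfold k. lia. }
    assert (H := Z.gcd_greatest _ _ _ H1 H2). rewrite Hw in H.
    apply Z.divide_1_r in H. lia. }
  exists a1, b1, (dx - a1), (dy - b1). repeat split; try ring; nia.
Qed.

Lemma unimodular_coords a1 b1 a2 b2 x y : a1 * b2 - a2 * b1 = 1 ->
  x = (x * b2 - y * a2) * a1 + (a1 * y - b1 * x) * a2 /\
  y = (x * b2 - y * a2) * b1 + (a1 * y - b1 * x) * b2.
Proof.
  intros Hdet. split.
  - transitivity (x * (a1 * b2 - a2 * b1)); [rewrite Hdet|]; ring.
  - transitivity (y * (a1 * b2 - a2 * b1)); [rewrite Hdet|]; ring.
Qed.

Section LatticeCone.
Variables (A : zpt -> Prop) (px py w1 w2 : Z).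
Let level (z : zpt) : Z := (fst z - px) * w1 + (snd z - py) * w2.

Lemma exists_min_level m : (exists z, convZ A (toR z) /\ z <> (px, py)) ->
  (forall z, convZ A (toR z) -> z <> (px, py) -> m <= level z) ->
  exists q, convZ A (toR q) /\ q <> (px, py) /\
    forall z, convZ A (toR z) -> z <> (px, py) -> level q <= level z.
Proof.
  intros [z0 [Hz0 Hz0P]] Hlb.
  destruct (Z_exists_min (fun n => exists z, convZ A (toR z) /\ z <> (px, py) /\ level z = n) m)
    as [k [[q [Hq [HqP <-]]] Hmin]].
  - exists (level z0), z0. auto.
  - intros n [z [Hz [HzP <-]]]. auto.
  - exists q. repeat split; auto. intros z Hz HzP. apply Hmin. eauto.
Qed.

Variable k : Z.
Hypothesis HP : convZ A (toR (px, py)).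
Hypothesis Hk : 1 <= k.
Hypothesis Hmin : forall z, convZ A (toR z) -> z <> (px, py) -> k <= level z.

Lemma min_level_primitive qx qy : convZ A (toR (qx, qy)) -> level (qx, qy) = k ->
  Z.gcd (qx - px) (qy - py) = 1.
Proof.
  intros HQ HQk. unfold level in HQk; simpl in HQk.
  set (g := Z.gcd (qx - px) (qy - py)).
  assert (Hg0 : 0 <= g) by apply Z.gcd_nonneg.
  destruct (Z.gcd_divide_l (qx - px) (qy - py)) as [x Hx].
  destruct (Z.gcd_divide_r (qx - px) (qy - py)) as [y Hy]. fold g in Hx, Hy.
  assert (Hg : g <> 0) by (intros E; rewrite E in Hx, Hy; nia).
  assert (Hr : convZ A (toR (px + x, py + y))).
  { apply (convZ_lattice_comb3 A (px, py) (qx, qy) (px, py) _ (g - 1) 1 0);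
      cbn [fst snd]; auto; nia. }
  assert (Hne : (px + x, py + y) <> (px, py)).
  { intros E. injection E as Ex Ey. assert (x = 0) by lia. assert (y = 0) by lia. subst. nia. }
  specialize (Hmin _ Hr Hne). unfold level in Hmin; simpl in Hmin. nia.
Qed.

Variables (a1 b1 a2 b2 : Z).
Hypothesis Hdet : a1 * b2 - a2 * b1 = 1.
Hypothesis HQ : convZ A (toR (px + a1 + a2, py + b1 + b2)).
Hypothesis HQk : (a1 + a2) * w1 + (b1 + b2) * w2 = k.
Hypothesis Hq1 : 1 <= a2 * w1 + b2 * w2.
Hypothesis Hq2 : 1 <= a1 * w1 + b1 * w2.

Lemma level_cone_coords z : level z =
  (a1 * w1 + b1 * w2) * ((fst z - px) * b2 - (snd z - py) * a2) +
  (a2 * w1 + b2 * w2) * (a1 * (snd z - py) - b1 * (fst z - px)).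
Proof.
  unfold level. rewrite <- (Z.mul_1_r (_ + _)) at 1. rewrite <- Hdet. ring.
Qed.

Lemma cone_coords_pos z : convZ A (toR z) -> z <> (px, py) ->
  1 <= (fst z - px) * b2 - (snd z - py) * a2 /\ 1 <= a1 * (snd z - py) - b1 * (fst z - px).
Proof.
  destruct z as [zx zy]; simpl. intros Hz HzP.
  set (u := (zx - px) * b2 - (zy - py) * a2). set (w := a1 * (zy - py) - b1 * (zx - px)).
  destruct (unimodular_coords a1 b1 a2 b2 (zx - px) (zy - py) Hdet) as [Ex Ey]. fold u w in Ex, Ey.
  assert (Hlev : k <= (a1 * w1 + b1 * w2) * u + (a2 * w1 + b2 * w2) * w).
  { specialize (Hmin _ Hz HzP). unfold level in Hmin; simpl in Hmin. rewrite Ex, Ey in Hmin. lia. }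
  (* A cone point on the wrong side of one edge would put [P + (a1, b1)] or [P + (a2, b2)],
     of level below [k], in the hull. *)
  split.
  - destruct (Z_le_gt_dec 1 u) as [|Hu]; [assumption|exfalso].
    assert ((a1 * w1 + b1 * w2) * u <= 0) by (apply Z.mul_nonneg_nonpos; lia).
    assert (Hw : 1 <= w).
    { destruct (Z_le_gt_dec 1 w); [assumption|].
      assert ((a2 * w1 + b2 * w2) * w <= 0) by (apply Z.mul_nonneg_nonpos; lia). lia. }
    assert (Hr : convZ A (toR (px + a2, py + b2))).
    { apply (convZ_lattice_comb3 A (px, py) (px + a1 + a2, py + b1 + b2) (zx, zy) _
               (w - 1) (- u) 1); cbn [fst snd]; auto; lia. }
    assert (Hne : (px + a2, py + b2) <> (px, py)).
    { intros E. injection E as E1 E2. assert (a2 = 0) by lia. assert (b2 = 0) by lia. subst. lia. }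
    specialize (Hmin _ Hr Hne). unfold level in Hmin; simpl in Hmin. lia.
  - destruct (Z_le_gt_dec 1 w) as [|Hw]; [assumption|exfalso].
    assert ((a2 * w1 + b2 * w2) * w <= 0) by (apply Z.mul_nonneg_nonpos; lia).
    assert (Hu : 1 <= u).
    { destruct (Z_le_gt_dec 1 u); [assumption|].
      assert ((a1 * w1 + b1 * w2) * u <= 0) by (apply Z.mul_nonneg_nonpos; lia). lia. }
    assert (Hr : convZ A (toR (px + a1, py + b1))).
    { apply (convZ_lattice_comb3 A (px, py) (px + a1 + a2, py + b1 + b2) (zx, zy) _
               (u - 1) (- w) 1); cbn [fst snd]; auto; lia. }
    assert (Hne : (px + a1, py + b1) <> (px, py)).
    { intros E. injection E as E1 E2. assert (a1 = 0) by lia. assert (b1 = 0) by lia. subst. lia. }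
    specialize (Hmin _ Hr Hne). unfold level in Hmin; simpl in Hmin. lia.
Qed.

End LatticeCone.

Lemma unimod_equiv_Upsilon_of_cone S d u1 u2 c1 c2 q1 q2 p :
  lw (polygon S) (IZR d) -> 0 < d -> S <> nil ->
  fst u1 * snd u2 - snd u1 * fst u2 = 1 -> 1 <= q1 -> 1 <= q2 ->
  polygon S (toR p) -> dotZ p u1 + c1 = 0 -> dotZ p u2 + c2 = 0 ->
  (forall z, In z S -> (dotZ z u1 + c1 = 0 /\ dotZ z u2 + c2 = 0) \/
     (1 <= dotZ z u1 + c1 /\ 1 <= dotZ z u2 + c2 /\
      q2 * (dotZ z u1 + c1) + q1 * (dotZ z u2 + c2) <= q1 + q2 + d - 1)) ->
  unimod_equiv (polygon S) (Upsilon_pred d).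
Proof.
  intros Hlw Hd HS Hdet Hq1 Hq2 Hp Ep1 Ep2 Hcone.
  assert (HU0 : forall z, In z S -> 0 <= dotZ z u1 + c1)
    by (intros z Hz; destruct (Hcone z Hz); lia).
  assert (HW0 : forall z, In z S -> 0 <= dotZ z u2 + c2)
    by (intros z Hz; destruct (Hcone z Hz); lia).
  destruct (lw_far_point S d u1 c1 0 Hlw HS
              (primitive_of_bezout u1 (snd u2) (- fst u2) ltac:(lia)) HU0) as [zu [Hzu HUzu]].
  destruct (lw_far_point S d u2 c2 0 Hlw HS
              (primitive_of_bezout u2 (- snd u1) (fst u1) ltac:(lia)) HW0) as [zw [Hzw HWzw]].
  destruct (Hcone zu Hzu) as [|[Uzu [Wzu Lzu]]]; [lia|].
  destruct (Hcone zw Hzw) as [|[Uzw [Wzw Lzw]]]; [lia|].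
  assert (Hq2d : q2 * (d - 1) <= d - 1).
  { assert (q2 * (d - 1) <= q2 * (dotZ zu u1 + c1 - 1)) by (apply Z.mul_le_mono_nonneg_l; lia).
    assert (0 <= q1 * (dotZ zu u2 + c2 - 1)) by (apply Z.mul_nonneg_nonneg; lia). lia. }
  assert (Hq1d : q1 * (d - 1) <= d - 1).
  { assert (q1 * (d - 1) <= q1 * (dotZ zw u2 + c2 - 1)) by (apply Z.mul_le_mono_nonneg_l; lia).
    assert (0 <= q2 * (dotZ zw u1 + c1 - 1)) by (apply Z.mul_nonneg_nonneg; lia). lia. }
  destruct (Z.eq_dec d 1) as [->|Hd1].
  - (* for [d = 1] every point of [S] has [U = W], so the width in direction [u1 - u2] is 0 *)
    exfalso.
    assert (Hprim : primitive_vec (fst u1 - fst u2, snd u1 - snd u2))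
      by (apply (primitive_of_bezout _ (snd u2) (- fst u2)); cbn [fst snd]; lia).
    assert (H := lw_le_width S 1 _ (c1 - c2) 0 0 Hlw HS Hprim).
    enough (1 <= 0) by lia. apply H. intros z Hz.
    replace (dotZ z (fst u1 - fst u2, snd u1 - snd u2) + (c1 - c2))
      with (dotZ z u1 + c1 - (dotZ z u2 + c2)) by (unfold dotZ; cbn [fst snd]; ring).
    destruct (Hcone z Hz) as [|[U1 [W1 L]]]; [lia|].
    assert (1 * (dotZ z u1 + c1 - 1) <= q2 * (dotZ z u1 + c1 - 1))
      by (apply Z.mul_le_mono_nonneg_r; lia).
    assert (1 * (dotZ z u2 + c2 - 1) <= q1 * (dotZ z u2 + c2 - 1))
      by (apply Z.mul_le_mono_nonneg_r; lia).
    lia.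
  - assert (q1 = 1) by nia. assert (q2 = 1) by nia. subst q1 q2.
    apply (unimod_equiv_Upsilon S d u1 u2 c1 c2 p zu zw); try lia;
      try assumption; try (apply convZ_point; assumption); unfold affZ; try (f_equal; lia).
    intros z Hz. unfold Upsilon_ineqZ; simpl. destruct (Hcone z Hz); nia.
Qed.

Lemma unimod_equiv_Upsilon_of_level_gap S d P w B :
  lw (polygon S) (IZR d) -> 0 < d -> S <> nil -> polygon S (toR P) -> primitive_vec w ->
  (forall z, In z S -> dotZ z w <= dotZ P w + B) ->
  (forall z, polygon S (toR z) -> z <> P ->
     dotZ P w + 2 <= dotZ z w /\ dotZ P w + B - d < dotZ z w) ->
  (exists z, polygon S (toR z) /\ z <> P) ->
  unimod_equiv (polygon S) (Upsilon_pred d).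
Proof.
  intros Hlw Hd HS HP Hw HB Hgap [z0 [Hz0 Hz0P]].
  destruct P as [px py], w as [w1 w2]. unfold primitive_vec in Hw; simpl in Hw.
  set (level := fun z : zpt => (fst z - px) * w1 + (snd z - py) * w2).
  assert (Elev : forall z, dotZ z (w1, w2) = dotZ (px, py) (w1, w2) + level z)
    by (intros; unfold dotZ, level; simpl; ring).
  assert (Hlb : forall z, polygon S (toR z) -> z <> (px, py) -> 2 <= level z).
  { intros z Hz HzP. specialize (Hgap z Hz HzP). rewrite (Elev z) in Hgap. lia. }
  destruct (exists_min_level (fun z => In z S) px py w1 w2 2 (ex_intro _ z0 (conj Hz0 Hz0P)) Hlb)
    as [[qx qy] [HQ [HQP Hmin]]].
  specialize (Hgap _ HQ HQP). rewrite (Elev (qx, qy)) in Hgap.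
  assert (Hk : 1 <= level (qx, qy)) by lia.
  assert (Hk2 : 2 <= level (qx, qy)) by lia.
  destruct (primitive_split (qx - px) (qy - py) w1 w2
              (min_level_primitive _ _ _ _ _ _ HP Hk Hmin _ _ HQ eq_refl) Hw Hk2)
    as [a1 [b1 [a2 [b2 [Ea [Eb [Hdet [Hq2 Hq1]]]]]]]].
  (* [U], [W] are the coordinates of [z - P] in the basis [(a1, b1)], [(a2, b2)] *)
  apply (unimod_equiv_Upsilon_of_cone S d (b2, - a2) (- b1, a1)
           (a2 * py - b2 * px) (b1 * px - a1 * py) (a2 * w1 + b2 * w2) (a1 * w1 + b1 * w2) (px, py));
    try assumption; try (unfold dotZ; cbn [fst snd]; lia).
  assert (HQ' : polygon S (toR (px + a1 + a2, py + b1 + b2))).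
  { replace (px + a1 + a2) with qx by lia. replace (py + b1 + b2) with qy by lia. exact HQ. }
  assert (HQk : (a1 + a2) * w1 + (b1 + b2) * w2 = level (qx, qy)) by (rewrite Ea, Eb; reflexivity).
  intros z Hz. destruct (classic (z = (px, py))) as [->|HzP].
  - left. unfold dotZ; cbn [fst snd]. split; ring.
  - right.
    destruct (cone_coords_pos _ _ _ _ _ _ HP Hk Hmin a1 b1 a2 b2 Hdet HQ' HQk Hq1 Hq2 z
                (convZ_point _ _ Hz) HzP) as [HU HW].
    replace (dotZ z (b2, - a2) + (a2 * py - b2 * px))
      with ((fst z - px) * b2 - (snd z - py) * a2) by (unfold dotZ; cbn [fst snd]; ring).
    replace (dotZ z (- b1, a1) + (b1 * px - a1 * py))
      with (a1 * (snd z - py) - b1 * (fst z - px)) by (unfold dotZ; cbn [fst snd]; ring).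
    assert (Hlev := level_cone_coords px py w1 w2 a1 b1 a2 b2 Hdet z).
    fold level in Hlev.
    specialize (HB z Hz). rewrite (Elev z) in HB. repeat split; try assumption. lia.
Qed.

Open Scope R_scope.

Lemma unimod_equiv_Upsilon_of_min_vertex S d P w a b :
  S <> nil -> lw (polygon S) (IZR d) -> (0 < d)%Z -> polygon S (toR P) -> primitive_vec w ->
  (forall z, In z S -> (dotZ P w <= dotZ z w)%Z) ->
  lw_dir (remove_vertex (polygon S) P) w a -> lw_dir (polygon S) w b ->
  a < IZR d -> a < b - 1 ->
  unimod_equiv (polygon S) (Upsilon_pred d).
Proof.
  intros HS Hlw Hd HP Hw Hmin Ha Hb Had Hab.
  destruct (lw_dir_polygon S w b HS Hb) as [s1 [s2 [H1 [H2 [<- Hext]]]]].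
  assert (E1 : dotZ s1 w = dotZ P w :> Z).
  { destruct (polygon_dot_bounds S (toR P) w (dotZ s1 w) (dotZ s2 w) HP Hext) as [HPs _].
    rewrite dot_toR in HPs. apply le_IZR in HPs. specialize (Hmin s1 H1). lia. }
  rewrite E1 in Hab.
  assert (Hlat : forall z z', polygon S (toR z) -> polygon S (toR z') -> z <> P -> z' <> P ->
                   IZR (dotZ z' w - dotZ z w) <= a).
  { intros. rewrite minus_IZR, <- !dot_toR.
    apply (proj2 Ha); apply convZ_point; split; assumption. }
  assert (Ha0 : 0 <= a).
  { destruct Ha as [[x [_ [Hx _]]] Hle]. specialize (Hle x x Hx Hx). lra. }
  assert (H2P : s2 <> P) by (intros ->; rewrite Z.sub_diag in Hab; lra).
  assert (H2in : polygon S (toR s2)) by (apply convZ_point; exact H2).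
  apply (unimod_equiv_Upsilon_of_level_gap S d P w (dotZ s2 w - dotZ P w)%Z); auto.
  - intros z Hz. specialize (Hext z Hz). lia.
  - intros z Hz HzP. specialize (Hlat z s2 Hz H2in HzP H2P).
    rewrite minus_IZR in Hlat, Hab.
    split; [enough (dotZ P w + 1 < dotZ z w)%Z by lia|]; apply lt_IZR.
    + rewrite plus_IZR. lra.
    + repeat rewrite ?minus_IZR, ?plus_IZR. lra.
  - exists s2. auto.
Qed.

Theorem lemma2p2 (S : list zpt) (d : Z) (P v : zpt) (a b : R) :
  S <> nil ->
  lw (polygon S) (IZR d) -> (0 < d)%Z ->
  is_vertex (polygon S) (toR P) ->
  primitive_vec v ->
  lw_dir (remove_vertex (polygon S) P) v a ->
  lw_dir (polygon S) v b ->
  a < IZR d -> a < b - 1 ->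
  unimod_equiv (polygon S) (Upsilon_pred d).
Proof.
  intros HS Hlw Hd [HP _] Hv Ha Hb Had Hab.
  destruct (lw_dir_polygon S v b HS Hb) as [s1 [s2 [H1 [H2 [Eb Hext]]]]].
  destruct (classic (s1 = P)) as [<-|N1].
  - apply (unimod_equiv_Upsilon_of_min_vertex S d s1 v a b); auto.
    intros z Hz. apply Hext, Hz.
  - destruct (classic (s2 = P)) as [<-|N2].
    + apply (unimod_equiv_Upsilon_of_min_vertex S d s2 (zopp v) a b);
        auto using primitive_zopp, lw_dir_zopp.
      intros z Hz. rewrite !dotZ_zopp. specialize (Hext z Hz). lia.
    + (* both extreme points survive in [Δ_P], so [lw_v(Δ_P) >= lw_v(Δ)] *)
      exfalso. destruct Ha as [_ Ha].
      specialize (Ha (toR s1) (toR s2) (convZ_point _ _ (conj (convZ_point _ _ H1) N1))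
                                       (convZ_point _ _ (conj (convZ_point _ _ H2) N2))).
      rewrite !dot_toR, <- minus_IZR, Eb in Ha. lra.
Qed.
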